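(* (a) Let $X$ be a compact Hausdorff space and let $G$ be a subgroup of $\mathrm{Homeo}(X)$, carrying the topology $\sigma$ induced by the compact-open topology. Then the natural action $G\times X\to X$, $(g,x)\mapsto g(x)$, is topologically exact. (b) Let $(X,d)$ be a metric space and let $G$ be a subgroup of the isometry group $\mathrm{Is}(X,d)$, carrying the topology $\sigma$ of pointwise convergence. Then the natural action $G\times X\to X$ is topologically exact.
   Context: Let $\alpha: G\times X\to X$ be a continuous action of a Hausdorff topological group $(G,\sigma)$ on a Hausdorff topological space $(X,\tau)$. The action is called topologically exact ($t$-exact) if there is no group topology $\sigma'\subsetneq\sigma$ on $G$ (strictly coarser, not necessarily Hausdorff) such that $\alpha$ is continuous as a map $(G,\sigma')\times(X,\tau)\to(X,\tau)$. $\mathrm{Homeo}(X)$ denotes the group of all self-homeomorphisms of $X$. *)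

From Stdlib Require Import Reals List.
Open Scope R_scope.

Definition is_topology {T : Type} (O : (T -> Prop) -> Prop) : Prop :=
  O (fun _ => True) /\
  (forall U V, O U -> O V -> O (fun x => U x /\ V x)) /\
  (forall F : (T -> Prop) -> Prop, (forall U, F U -> O U) ->
     O (fun x => exists U, F U /\ U x)).

Definition continuous {A B : Type} (OA : (A -> Prop) -> Prop)
  (OB : (B -> Prop) -> Prop) (f : A -> B) : Prop :=
  forall V, OB V -> OA (fun a => V (f a)).

Definition prod_topology {A B : Type} (OA : (A -> Prop) -> Prop)
  (OB : (B -> Prop) -> Prop) : (A * B -> Prop) -> Prop :=
  fun W => forall p, W p -> exists U V, OA U /\ OB V /\ U (fst p) /\ V (snd p) /\
     (forall a b, U a -> V b -> W (a, b)).

Definition hausdorff {T : Type} (O : (T -> Prop) -> Prop) : Prop :=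
  forall x y : T, x <> y -> exists U V, O U /\ O V /\ U x /\ V y /\
     (forall z, U z -> V z -> False).

Definition compact_set {T : Type} (O : (T -> Prop) -> Prop) (K : T -> Prop) : Prop :=
  forall F : (T -> Prop) -> Prop, (forall U, F U -> O U) ->
    (forall x, K x -> exists U, F U /\ U x) ->
    exists l : list (T -> Prop), (forall U, In U l -> F U) /\
      (forall x, K x -> exists U, In U l /\ U x).

Definition compact_space {T : Type} (O : (T -> Prop) -> Prop) : Prop :=
  compact_set O (fun _ => True).

(* topology generated by a subbasis S: finite intersections of members of S form a basis *)
Definition generated_topology {T : Type} (S : (T -> Prop) -> Prop) : (T -> Prop) -> Prop :=
  fun W => forall x, W x -> exists l : list (T -> Prop),
    (forall B, In B l -> S B) /\ (forall B, In B l -> B x) /\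
    (forall y, (forall B, In B l -> B y) -> W y).

Record is_group {G : Type} (mul : G -> G -> G) (inv : G -> G) (e : G) : Prop := {
  grp_mulA : forall a b c, mul a (mul b c) = mul (mul a b) c;
  grp_mul1g : forall a, mul e a = a;
  grp_mulVg : forall a, mul (inv a) a = e }.

(* group topology (not necessarily Hausdorff) *)
Definition group_topology {G : Type} (mul : G -> G -> G) (inv : G -> G)
  (O : (G -> Prop) -> Prop) : Prop :=
  is_topology O /\
  continuous (prod_topology O O) O (fun p => mul (fst p) (snd p)) /\
  continuous O O inv.

Definition is_action {G X : Type} (mul : G -> G -> G) (e : G) (act : G -> X -> X) : Prop :=
  (forall x, act e x = x) /\ (forall g h x, act (mul g h) x = act g (act h x)).

(* faithful action: G is (identified with) a subgroup of the self-maps of X *)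
Definition faithful {G X : Type} (act : G -> X -> X) : Prop :=
  forall g h, (forall x, act g x = act h x) -> g = h.

(* topological exactness of a continuous action of a Hausdorff topological group
   (G, OG) on (X, OX): the standing assumptions (OG a Hausdorff group topology,
   action jointly continuous) together with: every group topology O' coarser than OG
   for which the action is still continuous equals OG. *)
Definition t_exact {G X : Type} (mul : G -> G -> G) (inv : G -> G)
  (OG : (G -> Prop) -> Prop) (OX : (X -> Prop) -> Prop) (act : G -> X -> X) : Prop :=
  group_topology mul inv OG /\ hausdorff OG /\
  continuous (prod_topology OG OX) OX (fun p => act (fst p) (snd p)) /\
  (forall O' : (G -> Prop) -> Prop, group_topology mul inv O' ->
     (forall U, O' U -> OG U) ->
     continuous (prod_topology O' OX) OX (fun p => act (fst p) (snd p)) ->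
     forall U, OG U -> O' U).

Definition compact_open_topology {G X : Type} (OX : (X -> Prop) -> Prop)
  (act : G -> X -> X) : (G -> Prop) -> Prop :=
  generated_topology (fun B => exists (K U : X -> Prop),
     compact_set OX K /\ OX U /\ B = (fun g => forall x, K x -> U (act g x))).

Definition pointwise_topology {G X : Type} (OX : (X -> Prop) -> Prop)
  (act : G -> X -> X) : (G -> Prop) -> Prop :=
  generated_topology (fun B => exists (x : X) (U : X -> Prop),
     OX U /\ B = (fun g => U (act g x))).

Record is_metric {X : Type} (d : X -> X -> R) : Prop := {
  met_eq0 : forall x y, d x y = 0 <-> x = y;
  met_sym : forall x y, d x y = d y x;
  met_tri : forall x y z, d x z <= d x y + d y z }.

Definition metric_topology {X : Type} (d : X -> X -> R) : (X -> Prop) -> Prop :=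
  fun U => forall x, U x -> exists eps, 0 < eps /\ forall y, d x y < eps -> U y.

From Stdlib Require Import Reals List.
From Stdlib Require Import Classical FunctionalExtensionality PropExtensionality Lra.
Open Scope R_scope.

(* All the topologies on G considered here are generated by the sets
   [carries act K U] = {g | g K ⊆ U}, with K compact (in (b), K a point) and U open.
   If a coarser group topology σ' still makes the action continuous, each such set is
   σ'-open: for g in it, continuity of the action at the points (g, x), x ∈ K, gives
   σ'-neighbourhoods of g and neighbourhoods of x mapped into U, and finitely many of them
   cover K.  Hence σ ⊆ σ'.  What remains is to check that σ is a Hausdorff group topology
   for which the action is continuous: in (a) because disjoint compact sets of a compact
   Hausdorff space have disjoint open neighbourhoods, in (b) by the triangle inequality
   and invariance of d. *)

Section Lists.
Context {A B : Type}.

Lemma exists_filter (P : A -> Prop) (l : list A) :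
  exists l', (forall a, In a l' -> P a) /\ (forall a, In a l -> P a -> In a l').
Proof.
  induction l as [|a l [l' [Hl'P Hl'l]]].
  - exists nil. split; intros ? [].
  - destruct (classic (P a)) as [Pa|nPa].
    + exists (a :: l'). split.
      * intros a' [<-|Ha']; auto.
      * intros a' [<-|Ha'] Pa'; [left|right]; auto.
    + exists l'. split; [exact Hl'P|].
      intros a' [<-|Ha'] Pa'; [contradiction|auto].
Qed.

Lemma exists_witness_list (R : A -> B -> Prop) (l : list A) :
  (forall a, In a l -> exists b, R a b) ->
  exists l', (forall b, In b l' -> exists a, In a l /\ R a b) /\
    (forall a, In a l -> exists b, In b l' /\ R a b).
Proof.
  induction l as [|a l IH]; intros Hl.
  - exists nil. split; intros ? [].
  - destruct (Hl a (or_introl eq_refl)) as [b Rab].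
    destruct IH as [l' [Hl'1 Hl'2]]; [intros a' Ha'; apply Hl; right; exact Ha'|].
    exists (b :: l'). split.
    + intros b' [<-|Hb']; [exists a; split; [left|]; auto|].
      destruct (Hl'1 b' Hb') as [a' [Ha' Ra'b']]. exists a'. split; [right|]; auto.
    + intros a' [<-|Ha']; [exists b; split; [left|]; auto|].
      destruct (Hl'2 a' Ha') as [b' [Hb' Ra'b']]. exists b'. split; [right|]; auto.
Qed.

End Lists.

Section Topology.
Context {T : Type} (O : (T -> Prop) -> Prop).

Lemma open_ext (P Q : T -> Prop) : O P -> (forall x, P x <-> Q x) -> O Q.
Proof.
  intros HP HPQ. replace Q with P; [exact HP|].
  apply functional_extensionality; intro x. apply propositional_extensionality, HPQ.
Qed.

Hypothesis O_top : is_topology O.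

Lemma open_of_nbhds (W : T -> Prop) :
  (forall a, W a -> exists N, O N /\ N a /\ forall b, N b -> W b) -> O W.
Proof.
  intros HW. destruct O_top as [_ [_ O_union]].
  apply (open_ext (fun x => exists N, (O N /\ forall b, N b -> W b) /\ N x)).
  - apply O_union. intros N [HN _]. exact HN.
  - intro x. split.
    + intros [N [[_ HNW] Nx]]. auto.
    + intro Wx. destruct (HW x Wx) as [N [HN [Nx HNW]]]. exists N. auto.
Qed.

Lemma open_empty : O (fun _ => False).
Proof. apply open_of_nbhds. intros a []. Qed.

Lemma open_or (U V : T -> Prop) : O U -> O V -> O (fun x => U x \/ V x).
Proof.
  intros HU HV. apply open_of_nbhds. intros a [Ua|Va].
  - exists U. auto.
  - exists V. auto.
Qed.

Lemma nbhd_finite_meet {A : Type} (l : list A) (a : T) (Q : A -> T -> Prop) :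
  (forall B, In B l -> exists N, O N /\ N a /\ forall t, N t -> Q B t) ->
  exists N, O N /\ N a /\ forall B, In B l -> forall t, N t -> Q B t.
Proof.
  destruct O_top as [O_full [O_meet _]].
  induction l as [|B l IH]; intros Hl.
  - exists (fun _ => True). split; [exact O_full|split; [exact I|]]. intros B [].
  - destruct (Hl B (or_introl eq_refl)) as [N1 [HN1 [N1a HQ1]]].
    destruct IH as [N2 [HN2 [N2a HQ2]]]; [intros B' HB'; apply Hl; right; exact HB'|].
    exists (fun x => N1 x /\ N2 x). split; [apply O_meet; auto|split; [auto|]].
    intros B' [<-|HB'] t [N1t N2t]; [apply HQ1| apply (HQ2 B')]; auto.
Qed.

End Topology.

Lemma prod_topology_is_topology {A B : Type} (OA : (A -> Prop) -> Prop)
  (OB : (B -> Prop) -> Prop) :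
  is_topology OA -> is_topology OB -> is_topology (prod_topology OA OB).
Proof.
  intros [OA_full [OA_meet _]] [OB_full [OB_meet _]]. split; [|split].
  - intros p _. exists (fun _ => True), (fun _ => True). repeat split; auto.
  - intros W W' HW HW' p [Wp W'p].
    destruct (HW p Wp) as [U [V [HU [HV [Up [Vp HUV]]]]]].
    destruct (HW' p W'p) as [U' [V' [HU' [HV' [U'p [V'p HUV']]]]]].
    exists (fun a => U a /\ U' a), (fun b => V b /\ V' b).
    split; [apply OA_meet; auto|]. split; [apply OB_meet; auto|].
    split; [split; auto|]. split; [split; auto|].
    intros a b [Ua U'a] [Vb V'b]. split; [apply HUV|apply HUV']; auto.
  - intros F HF p [W [FW Wp]].
    destruct (HF W FW p Wp) as [U [V [HU [HV [Up [Vp HUV]]]]]].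
    exists U, V. repeat split; auto. intros a b Ua Vb. exists W. auto.
Qed.

Lemma rectangle_open {A B : Type} (OA : (A -> Prop) -> Prop) (OB : (B -> Prop) -> Prop)
  (U : A -> Prop) (V : B -> Prop) :
  OA U -> OB V -> prod_topology OA OB (fun p => U (fst p) /\ V (snd p)).
Proof. intros HU HV p [Up Vp]. exists U, V. repeat split; auto. Qed.

Section Generated.
Context {T : Type} (S : (T -> Prop) -> Prop).

Lemma generated_topology_is_topology : is_topology (generated_topology S).
Proof.
  split; [|split].
  - intros x _. exists nil. split; [intros B []|split; [intros B []|]]. intros; exact I.
  - intros U V HU HV x [Ux Vx].
    destruct (HU x Ux) as [l1 [Sl1 [l1x Hl1]]]. destruct (HV x Vx) as [l2 [Sl2 [l2x Hl2]]].
    exists (l1 ++ l2). split; [|split].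
    + intros B HB. apply in_app_or in HB as [HB|HB]; [apply Sl1|apply Sl2]; exact HB.
    + intros B HB. apply in_app_or in HB as [HB|HB]; [apply l1x|apply l2x]; exact HB.
    + intros y Hy. split; [apply Hl1|apply Hl2]; intros B HB; apply Hy, in_or_app; auto.
  - intros F HF x [U [FU Ux]].
    destruct (HF U FU x Ux) as [l [Sl [lx Hl]]].
    exists l. repeat split; auto. intros y Hy. exists U. auto.
Qed.

Lemma generated_topology_subbasis (B : T -> Prop) : S B -> generated_topology S B.
Proof.
  intros SB x Bx. exists (B :: nil). repeat split.
  - intros B' [<-|[]]. exact SB.
  - intros B' [<-|[]]. exact Bx.
  - intros y Hy. apply Hy. left. reflexivity.
Qed.

Lemma generated_topology_minimal (O : (T -> Prop) -> Prop) :
  is_topology O -> (forall B, S B -> O B) ->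
  forall W, generated_topology S W -> O W.
Proof.
  intros O_top HS W HW. apply open_of_nbhds; [exact O_top|]. intros a Wa.
  destruct (HW a Wa) as [l [Sl [la Hl]]].
  destruct (nbhd_finite_meet O O_top l a (fun B t => B t)) as [N [HN [Na HNl]]].
  { intros B HB. exists B. split; [apply HS, Sl, HB|split; [apply la, HB|auto]]. }
  exists N. split; [exact HN|split; [exact Na|]]. intros b Nb. apply Hl. intros B HB. exact (HNl B HB b Nb).
Qed.

Lemma continuous_into_generated {A : Type} (OA : (A -> Prop) -> Prop) (f : A -> T) :
  is_topology OA ->
  (forall B a, S B -> B (f a) -> exists N, OA N /\ N a /\ forall a', N a' -> B (f a')) ->
  continuous OA (generated_topology S) f.
Proof.
  intros OA_top Hf W HW. apply open_of_nbhds; [exact OA_top|]. intros a Wfa.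
  destruct (HW (f a) Wfa) as [l [Sl [lfa Hl]]].
  destruct (nbhd_finite_meet OA OA_top l a (fun B t => B (f t))) as [N [HN [Na HNl]]].
  { intros B HB. apply Hf; [apply Sl, HB|apply lfa, HB]. }
  exists N. split; [exact HN|split; [exact Na|]]. intros b Nb. apply Hl. intros B HB. exact (HNl B HB b Nb).
Qed.

Lemma continuous2_into_generated {A B : Type} (OA : (A -> Prop) -> Prop)
  (OB : (B -> Prop) -> Prop) (f : A -> B -> T) :
  is_topology OA -> is_topology OB ->
  (forall W a b, S W -> W (f a b) -> exists U V, OA U /\ OB V /\ U a /\ V b /\
     forall u v, U u -> V v -> W (f u v)) ->
  continuous (prod_topology OA OB) (generated_topology S) (fun p => f (fst p) (snd p)).
Proof.
  intros OA_top OB_top Hf. apply continuous_into_generated.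
  { apply prod_topology_is_topology; auto. }
  intros W [a b] SW Wab. destruct (Hf W a b SW Wab) as [U [V [HU [HV [Ua [Vb HUV]]]]]].
  exists (fun p => U (fst p) /\ V (snd p)). split; [apply rectangle_open; auto|].
  split; [split; auto|]. intros [u v] [Uu Vv]. apply HUV; auto.
Qed.

End Generated.

Lemma compact_singleton {T : Type} (O : (T -> Prop) -> Prop) (x : T) :
  compact_set O (fun y => y = x).
Proof.
  intros F HF Hcov. destruct (Hcov x eq_refl) as [U [FU Ux]].
  exists (U :: nil). split.
  - intros V [<-|[]]. exact FU.
  - intros y ->. exists U. split; [left; reflexivity|exact Ux].
Qed.

Lemma compact_space_complement_open {T : Type} (O : (T -> Prop) -> Prop) (U : T -> Prop) :
  compact_space O -> O U -> compact_set O (fun y => ~ U y).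
Proof.
  intros O_compact HU F HF Hcov.
  destruct (O_compact (fun V => F V \/ V = U)) as [l [Hl Hcovl]].
  - intros V [FV| ->]; auto.
  - intros x _. destruct (classic (U x)) as [Ux|nUx].
    + exists U. auto.
    + destruct (Hcov x nUx) as [V [FV Vx]]. exists V. auto.
  - destruct (exists_filter F l) as [l' [Hl'F Hll']]. exists l'. split; [exact Hl'F|].
    intros x nUx. destruct (Hcovl x I) as [V [HV Vx]].
    destruct (Hl V HV) as [FV| ->]; [exists V; auto|contradiction].
Qed.

Lemma compact_image {A B : Type} (OA : (A -> Prop) -> Prop) (OB : (B -> Prop) -> Prop)
  (f : A -> B) (K : A -> Prop) :
  continuous OA OB f -> compact_set OA K ->
  compact_set OB (fun y => exists x, K x /\ f x = y).
Proof.
  intros Hf HK F HF Hcov.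
  set (R := fun (N : A -> Prop) (V : B -> Prop) => F V /\ N = (fun x => V (f x))).
  destruct (HK (fun N => exists V, R N V)) as [l [Hl Hcovl]].
  - intros N [V [FV ->]]. apply Hf, HF, FV.
  - intros x Kx. destruct (Hcov (f x) (ex_intro _ x (conj Kx eq_refl))) as [V [FV Vfx]].
    exists (fun z => V (f z)). split; [exists V; split; auto|exact Vfx].
  - destruct (exists_witness_list R l Hl) as [l' [Hl'R Hll']]. exists l'. split.
    + intros V HV. destruct (Hl'R V HV) as [N [_ [FV _]]]. exact FV.
    + intros y [x [Kx <-]]. destruct (Hcovl x Kx) as [N [HN Nx]].
      destruct (Hll' N HN) as [V [HV [_ ->]]]. exists V. auto.
Qed.

Definition open_separated {T : Type} (O : (T -> Prop) -> Prop) (U A : T -> Prop) : Prop :=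
  O U /\ exists V, O V /\ (forall a, A a -> V a) /\ (forall z, U z -> V z -> False).

Section Separation.
Context {T : Type} (O : (T -> Prop) -> Prop).
Hypothesis O_top : is_topology O.

Lemma open_separated_finite_union (A : T -> Prop) (l : list (T -> Prop)) :
  (forall N, In N l -> open_separated O N A) ->
  exists W, (forall N, In N l -> forall z, N z -> W z) /\ open_separated O W A.
Proof.
  pose proof O_top as [O_full [O_meet _]].
  induction l as [|N l IH]; intros Hl.
  - exists (fun _ => False). split; [intros N []|].
    split; [apply open_empty; exact O_top|]. exists (fun _ => True). auto.
  - destruct IH as [W [HlW [HW [W' [HW' [HAW' HWW']]]]]].
    { intros N' HN'. apply Hl. right. exact HN'. }
    destruct (Hl N (or_introl eq_refl)) as [HN [V [HV [HAV HNV]]]].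
    exists (fun x => N x \/ W x). split.
    + intros N' [<-|HN'] z N'z; [left|right; apply (HlW N')]; auto.
    + split; [apply open_or; auto|]. exists (fun x => V x /\ W' x).
      split; [apply O_meet; auto|split; [auto|]].
      intros z [Nz|Wz] [Vz W'z]; [apply (HNV z)|apply (HWW' z)]; auto.
Qed.

Lemma compact_separation (K A : T -> Prop) :
  compact_set O K -> (forall x, K x -> exists U, U x /\ open_separated O U A) ->
  exists W, (forall x, K x -> W x) /\ open_separated O W A.
Proof.
  intros HK Hsep.
  destruct (HK (fun N => open_separated O N A)) as [l [Hl Hcovl]].
  - intros N [HN _]. exact HN.
  - intros x Kx. destruct (Hsep x Kx) as [U [Ux HU]]. exists U. auto.
  - destruct (open_separated_finite_union A l Hl) as [W [HlW HW]].
    exists W. split; [|exact HW].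
    intros x Kx. destruct (Hcovl x Kx) as [N [HN Nx]]. exact (HlW N HN x Nx).
Qed.

Hypothesis O_hausdorff : hausdorff O.

Lemma compact_separate_point (C : T -> Prop) (p : T) :
  compact_set O C -> ~ C p -> exists W, (forall y, C y -> W y) /\ open_separated O W (eq p).
Proof.
  intros HC nCp. apply compact_separation; [exact HC|]. intros y Cy.
  assert (Hyp : y <> p) by (intros ->; contradiction).
  destruct (O_hausdorff y p Hyp) as [U [V [HU [HV [Uy [Vp HUV]]]]]].
  exists U. split; [exact Uy|]. split; [exact HU|]. exists V. split; [exact HV|].
  split; [intros a <-; exact Vp|exact HUV].
Qed.

Lemma compact_separate_compact (K C : T -> Prop) :
  compact_set O K -> compact_set O C -> (forall x, K x -> ~ C x) ->
  exists W, (forall x, K x -> W x) /\ open_separated O W C.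
Proof.
  intros HK HC HKC. apply compact_separation; [exact HK|]. intros x Kx.
  destruct (compact_separate_point C x HC (HKC x Kx)) as [W [HCW [HW [W' [HW' [HxW' HWW']]]]]].
  exists W'. split; [apply HxW'; reflexivity|]. split; [exact HW'|].
  exists W. split; [exact HW|]. split; [exact HCW|]. intros z W'z Wz. exact (HWW' z Wz W'z).
Qed.

Lemma compact_closed (K : T -> Prop) : compact_set O K -> O (fun y => ~ K y).
Proof.
  intros HK. apply open_of_nbhds; [exact O_top|]. intros y nKy.
  destruct (compact_separate_point K y HK nKy) as [W [HKW [_ [W' [HW' [HyW' HWW']]]]]].
  exists W'. split; [exact HW'|]. split; [apply HyW'; reflexivity|].
  intros z W'z Kz. exact (HWW' z (HKW z Kz) W'z).
Qed.

End Separation.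

Section Action.
Context {G X : Type} (mul : G -> G -> G) (inv : G -> G) (e : G) (act : G -> X -> X).
Hypotheses (G_group : is_group mul inv e) (act_action : is_action mul e act).

Lemma mul_inv_r (a : G) : mul a (inv a) = e.
Proof.
  destruct G_group as [mulA mul1g mulVg].
  transitivity (mul (mul (inv (inv a)) (inv a)) (mul a (inv a))).
  { rewrite mulVg, mul1g. reflexivity. }
  rewrite <- mulA, (mulA (inv a) a), mulVg, mul1g. apply mulVg.
Qed.

Lemma act_inv_l (g : G) (x : X) : act (inv g) (act g x) = x.
Proof.
  destruct act_action as [act1 actM].
  rewrite <- actM, (grp_mulVg _ _ _ G_group). apply act1.
Qed.

Lemma act_inv_r (g : G) (x : X) : act g (act (inv g) x) = x.
Proof.
  destruct act_action as [act1 actM].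
  rewrite <- actM, mul_inv_r. apply act1.
Qed.

End Action.

Definition carries {G X : Type} (act : G -> X -> X) (K U : X -> Prop) : G -> Prop :=
  fun g => forall x, K x -> U (act g x).

Section SubbasicSets.
Context {G X : Type} (OX : (X -> Prop) -> Prop) (act : G -> X -> X).

Lemma carries_compact_open (K U : X -> Prop) :
  compact_set OX K -> OX U -> compact_open_topology OX act (carries act K U).
Proof.
  intros HK HU. apply generated_topology_subbasis. exists K, U. auto.
Qed.

Lemma carries_singleton (x : X) (U : X -> Prop) (g : G) :
  carries act (fun y => y = x) U g <-> U (act g x).
Proof. split; [intros Hg; apply Hg; reflexivity|intros Ugx y ->; exact Ugx]. Qed.

Lemma pointwise_compact_open (x : X) (U : X -> Prop) :
  OX U -> compact_open_topology OX act (fun g => U (act g x)).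
Proof.
  intros HU. apply (open_ext _ (carries act (fun y => y = x) U)); [|apply carries_singleton].
  apply carries_compact_open; [apply compact_singleton|exact HU].
Qed.

Lemma pointwise_open (x : X) (U : X -> Prop) :
  OX U -> pointwise_topology OX act (fun g => U (act g x)).
Proof. intros HU. apply generated_topology_subbasis. exists x, U. auto. Qed.

Lemma hausdorff_of_faithful (OG : (G -> Prop) -> Prop) :
  hausdorff OX -> faithful act ->
  (forall x U, OX U -> OG (fun g => U (act g x))) -> hausdorff OG.
Proof.
  intros OX_hausdorff act_faithful HOG g h Hgh.
  destruct (not_all_ex_not _ _ (fun H => Hgh (act_faithful g h H))) as [x Hx].
  destruct (OX_hausdorff _ _ Hx) as [U [V [HU [HV [Ugx [Vhx HUV]]]]]].
  exists (fun k => U (act k x)), (fun k => V (act k x)).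
  split; [apply HOG, HU|split; [apply HOG, HV|]].
  split; [exact Ugx|split; [exact Vhx|]]. intros k. apply HUV.
Qed.

Lemma carries_open_of_continuous (O' : (G -> Prop) -> Prop) (K U : X -> Prop) :
  is_topology O' -> continuous (prod_topology O' OX) OX (fun p => act (fst p) (snd p)) ->
  compact_set OX K -> OX U -> O' (carries act K U).
Proof.
  intros O'_top act_cont HK HU. apply open_of_nbhds; [exact O'_top|]. intros g HgKU.
  set (F := fun V => OX V /\ exists N, O' N /\ N g /\ forall h y, N h -> V y -> U (act h y)).
  destruct (HK F) as [l [Hl Hcovl]].
  - intros V [HV _]. exact HV.
  - intros x Kx. destruct (act_cont U HU (g, x) (HgKU x Kx)) as [N [V [HN [HV [Ng [Vx HNV]]]]]].
    exists V. split; [split; [exact HV|exists N; auto]|exact Vx].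
  - destruct (nbhd_finite_meet O' O'_top l g (fun V h => forall y, V y -> U (act h y)))
      as [N [HN [Ng HNl]]].
    { intros V HV. destruct (Hl V HV) as [_ [N [HN [Ng HNV]]]].
      exists N. split; [exact HN|split; [exact Ng|]]. intros h Nh y Vy. exact (HNV h y Nh Vy). }
    exists N. split; [exact HN|split; [exact Ng|]]. intros h Nh x Kx.
    destruct (Hcovl x Kx) as [V [HV Vx]]. exact (HNl V HV h Nh x Vx).
Qed.

Lemma compact_open_topology_minimal (O' : (G -> Prop) -> Prop) :
  is_topology O' -> continuous (prod_topology O' OX) OX (fun p => act (fst p) (snd p)) ->
  forall W, compact_open_topology OX act W -> O' W.
Proof.
  intros O'_top act_cont. apply generated_topology_minimal; [exact O'_top|].
  intros B [K [U [HK [HU ->]]]]. exact (carries_open_of_continuous O' K U O'_top act_cont HK HU).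
Qed.

Lemma pointwise_topology_minimal (O' : (G -> Prop) -> Prop) :
  is_topology O' -> continuous (prod_topology O' OX) OX (fun p => act (fst p) (snd p)) ->
  forall W, pointwise_topology OX act W -> O' W.
Proof.
  intros O'_top act_cont. apply generated_topology_minimal; [exact O'_top|].
  intros B [x [U [HU ->]]]. apply (open_ext _ (carries act (fun y => y = x) U)); [|apply carries_singleton].
  exact (carries_open_of_continuous O' _ U O'_top act_cont (compact_singleton OX x) HU).
Qed.

End SubbasicSets.

Section CompactOpen.
Context {X G : Type} (OX : (X -> Prop) -> Prop)
  (mul : G -> G -> G) (inv : G -> G) (e : G) (act : G -> X -> X).
Hypotheses (OX_top : is_topology OX) (OX_hausdorff : hausdorff OX)
  (OX_compact : compact_space OX) (G_group : is_group mul inv e)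
  (act_action : is_action mul e act) (act_continuous : forall g, continuous OX OX (act g)).

Lemma compact_open_is_topology : is_topology (compact_open_topology OX act).
Proof. apply generated_topology_is_topology. Qed.

Lemma carries_complement_open (U V : X -> Prop) :
  OX U -> OX V -> compact_open_topology OX act (carries act (fun y => ~ U y) V).
Proof.
  intros HU HV. apply carries_compact_open; [|exact HV].
  apply compact_space_complement_open; auto.
Qed.

(* If [g0 h0] carries [K] into [U], separate the compact sets [h0 K] and [X \ g0^-1 U]
   by disjoint open sets [W] and [W']; then [carries act (X \ W') U] and
   [carries act K W] are the required neighbourhoods. *)
Lemma compact_open_mul_continuous :
  continuous (prod_topology (compact_open_topology OX act) (compact_open_topology OX act))
    (compact_open_topology OX act) (fun p => mul (fst p) (snd p)).
Proof.
  destruct act_action as [_ actM].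
  apply continuous2_into_generated; [exact compact_open_is_topology..|].
  intros B g0 h0 [K [U [HK [HU ->]]]] Hg0h0.
  destruct (compact_separate_compact OX OX_top OX_hausdorff
              (fun y => exists x, K x /\ act h0 x = y) (fun y => ~ U (act g0 y)))
    as [W [HKW [HW [W' [HW' [HUW' HWW']]]]]].
  - exact (compact_image OX OX (act h0) K (act_continuous h0) HK).
  - exact (compact_space_complement_open OX _ OX_compact (act_continuous g0 U HU)).
  - intros y [x [Kx <-]] nU. apply nU. rewrite <- actM. exact (Hg0h0 x Kx).
  - exists (carries act (fun y => ~ W' y) U), (carries act K W).
    split; [exact (carries_complement_open W' U HW' HU)|].
    split; [exact (carries_compact_open OX act K W HK HW)|].
    split; [intros y nW'y; apply NNPP; intro nU; exact (nW'y (HUW' y nU))|].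
    split; [intros x Kx; apply HKW; exists x; auto|].
    intros u v Hu Hv x Kx. cbv beta. rewrite actM.
    apply Hu. intro W'vx. exact (HWW' _ (Hv x Kx) W'vx).
Qed.

(* [g^-1] carries [K] into [U] iff [g] carries [X \ U] into [X \ K]. *)
Lemma compact_open_inv_continuous :
  continuous (compact_open_topology OX act) (compact_open_topology OX act) inv.
Proof.
  apply continuous_into_generated; [exact compact_open_is_topology|].
  intros B a [K [U [HK [HU ->]]]] Ha.
  exists (carries act (fun y => ~ U y) (fun z => ~ K z)).
  split; [exact (carries_complement_open U _ HU (compact_closed OX OX_top OX_hausdorff K HK))|].
  split.
  - intros y nUy Kay. apply nUy. rewrite <- (act_inv_l mul inv e act G_group act_action a y).
    exact (Ha _ Kay).
  - intros g Hg x Kx. apply NNPP. intro nU. apply (Hg _ nU).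
    rewrite (act_inv_r mul inv e act G_group act_action). exact Kx.
Qed.

Lemma compact_open_act_continuous :
  continuous (prod_topology (compact_open_topology OX act) OX) OX
    (fun p => act (fst p) (snd p)).
Proof.
  intros V HV [g x] Vgx. simpl in Vgx.
  destruct (compact_separate_point OX OX_top OX_hausdorff (fun y => ~ V (act g y)) x
              (compact_space_complement_open OX _ OX_compact (act_continuous g V HV))
              (fun nV => nV Vgx))
    as [W [HVW [HW [W' [HW' [HxW' HWW']]]]]].
  exists (carries act (fun y => ~ W y) V), W'.
  split; [exact (carries_complement_open W V HW HV)|].
  split; [exact HW'|].
  split; [intros y nWy; apply NNPP; intro nV; exact (nWy (HVW y nV))|].
  split; [apply HxW'; reflexivity|].
  intros h y Hh W'y. apply Hh. intro Wy. exact (HWW' y Wy W'y).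
Qed.

End CompactOpen.

Section Isometries.
Context {X G : Type} (d : X -> X -> R)
  (mul : G -> G -> G) (inv : G -> G) (e : G) (act : G -> X -> X).
Hypotheses (d_metric : is_metric d) (G_group : is_group mul inv e)
  (act_action : is_action mul e act)
  (act_isometry : forall g x y, d (act g x) (act g y) = d x y).

Lemma dist_refl (x : X) : d x x = 0.
Proof. apply (met_eq0 d d_metric). reflexivity. Qed.

Lemma dist_nonneg (x y : X) : 0 <= d x y.
Proof.
  pose proof (met_tri d d_metric x y x) as Htri.
  rewrite (met_sym d d_metric y x), dist_refl in Htri. lra.
Qed.

Lemma metric_topology_is_topology : is_topology (metric_topology d).
Proof.
  split; [|split].
  - intros x _. exists 1. split; [lra|auto].
  - intros U V HU HV x [Ux Vx].
    destruct (HU x Ux) as [r1 [Hr1 HUr1]]. destruct (HV x Vx) as [r2 [Hr2 HVr2]].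
    exists (Rmin r1 r2). split; [apply Rmin_glb_lt; auto|].
    intros y Hy. split; [apply HUr1|apply HVr2].
    + eapply Rlt_le_trans; [exact Hy|apply Rmin_l].
    + eapply Rlt_le_trans; [exact Hy|apply Rmin_r].
  - intros F HF x [U [FU Ux]]. destruct (HF U FU x Ux) as [r [Hr HUr]].
    exists r. split; [exact Hr|]. intros y Hy. exists U. auto.
Qed.

Lemma ball_open (c : X) (r : R) : metric_topology d (fun y => d c y < r).
Proof.
  intros x Hx. exists (r - d c x). split; [lra|]. intros y Hy.
  pose proof (met_tri d d_metric c x y). lra.
Qed.

Lemma metric_hausdorff : hausdorff (metric_topology d).
Proof.
  intros x y Hxy.
  assert (Hr : 0 < d x y).
  { pose proof (dist_nonneg x y).
    assert (d x y <> 0) by (intro H0; apply Hxy, (met_eq0 d d_metric), H0). lra. }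
  exists (fun z => d x z < d x y / 2), (fun z => d y z < d x y / 2).
  split; [apply ball_open|split; [apply ball_open|]].
  split; [rewrite dist_refl; lra|split; [rewrite dist_refl; lra|]].
  intros z Hxz Hyz. pose proof (met_tri d d_metric x z y) as Htri.
  rewrite (met_sym d d_metric z y) in Htri. lra.
Qed.

Lemma pointwise_ball_open (c x : X) (r : R) :
  pointwise_topology (metric_topology d) act (fun g => d c (act g x) < r).
Proof. exact (pointwise_open (metric_topology d) act x _ (ball_open c r)). Qed.

Lemma pointwise_is_topology : is_topology (pointwise_topology (metric_topology d) act).
Proof. apply generated_topology_is_topology. Qed.

Lemma pointwise_mul_continuous :
  continuous
    (prod_topology (pointwise_topology (metric_topology d) act)
       (pointwise_topology (metric_topology d) act))
    (pointwise_topology (metric_topology d) act) (fun p => mul (fst p) (snd p)).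
Proof.
  destruct act_action as [_ actM].
  apply continuous2_into_generated; [exact pointwise_is_topology..|].
  intros B g0 h0 [x [U [HU ->]]] Ux. cbv beta in Ux. rewrite actM in Ux.
  destruct (HU _ Ux) as [r [Hr HUr]].
  exists (fun g => d (act g0 (act h0 x)) (act g (act h0 x)) < r / 2),
         (fun h => d (act h0 x) (act h x) < r / 2).
  split; [apply pointwise_ball_open|split; [apply pointwise_ball_open|]].
  split; [rewrite dist_refl; lra|split; [rewrite dist_refl; lra|]].
  intros u v Hu Hv. cbv beta. rewrite actM. apply HUr.
  pose proof (met_tri d d_metric (act g0 (act h0 x)) (act u (act h0 x)) (act u (act v x)))
    as Htri.
  rewrite act_isometry in Htri. lra.
Qed.

Lemma pointwise_inv_continuous :
  continuous (pointwise_topology (metric_topology d) act)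
    (pointwise_topology (metric_topology d) act) inv.
Proof.
  apply continuous_into_generated; [exact pointwise_is_topology|].
  intros B a [x [U [HU ->]]] Ux. cbv beta in Ux.
  destruct (HU _ Ux) as [r [Hr HUr]].
  exists (fun g => d x (act g (act (inv a) x)) < r).
  split; [apply pointwise_ball_open|].
  split; [rewrite (act_inv_r mul inv e act G_group act_action), dist_refl; lra|].
  intros g Hg. apply HUr.
  rewrite <- (act_isometry g), (act_inv_r mul inv e act G_group act_action), met_sym;
    [exact Hg|exact d_metric].
Qed.

Lemma pointwise_act_continuous :
  continuous (prod_topology (pointwise_topology (metric_topology d) act) (metric_topology d))
    (metric_topology d) (fun p => act (fst p) (snd p)).
Proof.
  intros V HV [g x] Vgx. simpl in Vgx.
  destruct (HV _ Vgx) as [r [Hr HVr]].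
  exists (fun h => d (act g x) (act h x) < r / 2), (fun y => d x y < r / 2).
  split; [apply pointwise_ball_open|split; [apply ball_open|]].
  split; [simpl; rewrite dist_refl; lra|split; [simpl; rewrite dist_refl; lra|]].
  intros h y Hh Hy. simpl. apply HVr.
  pose proof (met_tri d d_metric (act g x) (act h x) (act h y)) as Htri.
  rewrite act_isometry in Htri. lra.
Qed.

End Isometries.

Theorem lemma2p3 :
  (forall (X G : Type) (OX : (X -> Prop) -> Prop)
     (mul : G -> G -> G) (inv : G -> G) (e : G) (act : G -> X -> X),
     is_topology OX -> hausdorff OX -> compact_space OX ->
     is_group mul inv e -> is_action mul e act -> faithful act ->
     (forall g, continuous OX OX (act g)) ->
     t_exact mul inv (compact_open_topology OX act) OX act)
  /\
  (forall (X G : Type) (d : X -> X -> R)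
     (mul : G -> G -> G) (inv : G -> G) (e : G) (act : G -> X -> X),
     is_metric d ->
     is_group mul inv e -> is_action mul e act -> faithful act ->
     (forall g x y, d (act g x) (act g y) = d x y) ->
     t_exact mul inv (pointwise_topology (metric_topology d) act) (metric_topology d) act).
Proof.
  split.
  - intros X G OX mul inv e act OX_top OX_hausdorff OX_compact G_group act_action
      act_faithful act_continuous.
    split; [split; [|split]|split; [|split]].
    + apply compact_open_is_topology.
    + eapply compact_open_mul_continuous; eassumption.
    + eapply compact_open_inv_continuous; eassumption.
    + apply (hausdorff_of_faithful OX act); [assumption..|]. apply pointwise_compact_open.
    + apply compact_open_act_continuous; assumption.
    + intros O' [O'_top _] _ act_cont'. apply compact_open_topology_minimal; assumption.
  - intros X G d mul inv e act d_metric G_group act_action act_faithful act_isometry.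
    split; [split; [|split]|split; [|split]].
    + apply pointwise_is_topology.
    + eapply pointwise_mul_continuous; eassumption.
    + eapply pointwise_inv_continuous; eassumption.
    + apply (hausdorff_of_faithful (metric_topology d) act); [apply metric_hausdorff; assumption|
        assumption|]. intros x U HU. apply pointwise_open, HU.
    + apply pointwise_act_continuous; assumption.
    + intros O' [O'_top _] _ act_cont'. apply pointwise_topology_minimal; assumption.
Qed.
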